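(* Consider the MPC closed-loop system described in the context. Assume that $A$ is Schur stable, i.e. all eigenvalues of $A$ have modulus strictly less than $1$. Assume also that $\mathbb{E}\bigl[\bar\varphi(\bar F\bar w)\bigr]=0$ for every initial condition. Then the closed loop satisfies $$\sup_{t\in\mathbb{N}_0}\mathbb{E}_{x_0}\bigl[\|x_t\|^2\bigr]<\infty.$$
   Context: **System.** Consider the discrete-time system $x_{t+1}=Ax_t+Bu_t+Fw_t+r$ for $t\in\mathbb{N}_0$. The data are: - $x_t\in\mathbb{R}^n$, $u_t\in\mathbb{R}^m$ and $w_t\in\mathbb{R}^n$; - known matrices $A$, $B$, $F$ and a known vector $r$; - a given initial state $x_0$; - i.i.d. noise vectors $w_t$, possibly with unbounded support, with mean $\mu_w$ and finite covariance $\Sigma_w$; - the input constraint $\|u_t\|_\infty\le U_{\max}$, where $U_{\max}>0$. **Stacked notation.** Fix a horizon $N\in\mathbb{N}$. Define - $\bar x=(x_0^\mathsf{T},\dots,x_N^\mathsf{T})^\mathsf{T}$, $\bar u=(u_0^\mathsf{T},\dots,u_{N-1}^\mathsf{T})^\mathsf{T}$, $\bar w=(w_0^\mathsf{T},\dots,w_{N-1}^\mathsf{T})^\mathsf{T}$, and $\bar r=(r^\mathsf{T},\dots,r^\mathsf{T})^\mathsf{T}\in\mathbb{R}^{Nn}$; - $\bar F=\operatorname{diag}(F,\dots,F)$ and $\bar A=(I,A^\mathsf{T},\dots,(A^N)^\mathsf{T})^\mathsf{T}$; - $\bar B$ is the block matrix with blocks $A^{k-1-j}B$ for $j<k$ and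 $0$ otherwise ($k=0,\dots,N$, $j=0,\dots,N-1$); - $\bar D$ is the block matrix with blocks $A^{k-1-j}$ for $j<k$ and $0$ otherwise. Then $\bar x=\bar Ax_0+\bar B\bar u+\bar D\bar F\bar w+\bar D\bar r$. Let $Q_0,\dots,Q_N$ and $R_0,\dots,R_{N-1}$ be symmetric positive definite, and set $\bar Q=\operatorname{diag}(Q_0,\dots,Q_N)$ and $\bar R=\operatorname{diag}(R_0,\dots,R_{N-1})$. **Saturated noise measurements.** Let $0<\phi_{\max}\le U_{\max}$, and let $\varphi_i^j:\mathbb{R}\to\mathbb{R}$ ($i=0,\dots,N-1$, $j=1,\dots,n$) be functions bounded in absolute value by $\phi_{\max}$. Set $\varphi_i(Fw_i)=(\varphi_i^1(F_1w_i),\dots,\varphi_i^n(F_nw_i))^\mathsf{T}$, with $F_j$ the $j$-th row of $F$, and $\bar\varphi(\bar F\bar w)=(\varphi_0(Fw_0)^\mathsf{T},\dots,\varphi_{N-1}(Fw_{N-1})^\mathsf{T})^\mathsf{T}$. **Finite-horizon problem.** For a given initial state $x$, the finite-horizon problem is to minimize $\mathbb{E}_{x}[\bar x^\mathsf{T}\bar Q\bar x+\bar u^\mathsf{T}\bar R\bar u]$, with $x_0=x$, over policies $\bar u=\bar G\bar\varphi(\bar F\bar w)+\bar d$. Here $\bar d\in\mathbb{R}^{Nm}$, and $\bar G\in\mathbb{R}^{Nm\times Nn}$ is strictly block lower triangular with $m\times n$ blocks. The constraint is $|\bar d_i|+\|\bar G_i\|_1\phi_{\max}\le U_{\max}$ for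 $i=1,\dots,Nm$, where $\bar G_i$ is the $i$-th row of $\bar G$; equivalently, $\|\bar Gv+\bar d\|_\infty\le U_{\max}$ whenever $\|v\|_\infty\le\phi_{\max}$. **MPC closed loop.** At each time $t$, the finite-horizon problem is solved with initial state $x_t$, giving an optimal solution $(\bar G^*,\bar d^* )$ that depends on $x_t$. Let $\bar d^*_{0|t}\in\mathbb{R}^m$ denote the first $m$ entries of $\bar d^*$. The control $u_t=\bar d^*_{0|t}$ is applied, so the closed loop is $$x_{t+1}=Ax_t+B\bar d^*_{0|t}+Fw_t+r,\qquad t\in\mathbb{N}_0.$$ *)

From HB Require Import structures.
From mathcomp Require Import all_boot all_order all_algebra.
From mathcomp Require Import all_classical all_reals all_analysis.
From mathcomp Require Import complex.
Set Implicit Arguments. Unset Strict Implicit. Unset Printing Implicit Defensive.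
Import Order.TTheory GRing.Theory Num.Theory.
Local Open Scope classical_set_scope.
Local Open Scope ring_scope.

Section Defs.
Context {R : realType}.

Definition sqnorm {n : nat} (v : 'cV[R]_n) : R := \sum_(i < n) v i 0 ^+ 2.

Definition qform {n : nat} (M : 'M[R]_n) (v : 'cV[R]_n) : R := (v^T *m M *m v) 0 0.

Definition posdef {n : nat} (M : 'M[R]_n) : Prop :=
  M^T = M /\ forall v : 'cV[R]_n, v != 0 -> 0 < qform M v.

Definition schur_stable {n : nat} (A : 'M[R]_n) : Prop :=
  forall z : R[i], root (char_poly (map_mx (real_complex R) A)) z -> `|z| < 1.

Context {d : measure_display} {T : measurableType d}.

Definition box_event {n : nat} (w : T -> 'cV[R]_n) (B : 'I_n -> set R) : set T :=
  [set om | forall j, B j (w om j 0)].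

(* Independence/identical distribution are
   stated on boxes prod_j B_j (B_j Borel), which form a pi-system generating
   the Borel sigma-algebra of R^n. *)
Definition iid_finite_cov (P : probability T R) {n : nat} (w : nat -> T -> 'cV[R]_n) : Prop :=
  [/\ (forall t (j : 'I_n), measurable_fun setT (fun om => w t om j 0)),
      (forall t (B : 'I_n -> set R), (forall j, measurable (B j)) ->
          P (box_event (w t) B) = P (box_event (w 0%N) B)),
      (forall (s : seq nat) (B : nat -> 'I_n -> set R), uniq s ->
          (forall t j, measurable (B t j)) ->
          P (\bigcap_(t in [set` s]) box_event (w t) (B t))
          = \big[*%E/1%E]_(t <- s) P (box_event (w t) (B t)))
    & (forall t (j : 'I_n), (\int[P]_om ((w t om j 0) ^+ 2)%:E < +oo)%E)].

Section FiniteHorizon.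
Variables (n m N : nat) (A : 'M[R]_n) (B : 'M[R]_(n, m)) (F : 'M[R]_n) (r : 'cV[R]_n).
Variables (Q : 'I_N.+1 -> 'M[R]_n) (Rw : 'I_N -> 'M[R]_m).
Variables (Umax phimax : R) (phi : 'I_N -> 'I_n -> R -> R).
Variables (P : probability T R) (w : nat -> T -> 'cV[R]_n).

Definition sat_vec (i : 'I_N) (y : 'cV[R]_n) : 'cV[R]_n := \col_j phi i j (y j 0).

(* block form of  ubar = Gbar varphibar(Fbar wbar) + dbar :
   G k j is the (k,j) m x n block of Gbar, d k the k-th m-block of dbar *)
Definition policy_input (G : 'I_N -> 'I_N -> 'M[R]_(m, n)) (dd : 'I_N -> 'cV[R]_m)
  (k : 'I_N) (om : T) : 'cV[R]_m :=
  \sum_(j < N) G k j *m sat_vec j (F *m w j om) + dd k.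

Definition ext_input (u : 'I_N -> 'cV[R]_m) (k : nat) : 'cV[R]_m :=
  if insub k is Some k' then u k' else 0.

Fixpoint traj (xi : 'cV[R]_n) (u : nat -> 'cV[R]_m) (om : T) (k : nat) : 'cV[R]_n :=
  match k with
  | 0%N => xi
  | k'.+1 => A *m traj xi u om k' + B *m u k' + F *m w k' om + r
  end.

Definition fh_cost (xi : 'cV[R]_n) G dd (om : T) : R :=
  \sum_(k < N.+1)
      qform (Q k) (traj xi (ext_input (fun k => policy_input G dd k om)) om k)
  + \sum_(k < N) qform (Rw k) (policy_input G dd k om).

Definition fh_J (xi : 'cV[R]_n) G dd : \bar R := \int[P]_om (fh_cost xi G dd om)%:E.

Definition fh_feasible (G : 'I_N -> 'I_N -> 'M[R]_(m, n)) (dd : 'I_N -> 'cV[R]_m) : Prop :=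
  (forall k j : 'I_N, (k <= j)%N -> G k j = 0) /\
  (forall (k : 'I_N) (i : 'I_m),
      `|dd k i 0| + (\sum_(j < N) \sum_(l < n) `|G k j i l|) * phimax <= Umax).

Definition fh_optimal (xi : 'cV[R]_n) G dd : Prop :=
  fh_feasible G dd /\
  (forall G' dd', fh_feasible G' dd' -> (fh_J xi G dd <= fh_J xi G' dd')%E).

Fixpoint cl_state (dstar : 'cV[R]_n -> 'cV[R]_m) (x0 : 'cV[R]_n) (t : nat) (om : T)
  : 'cV[R]_n :=
  match t with
  | 0%N => x0
  | t'.+1 => A *m cl_state dstar x0 t' om + B *m dstar (cl_state dstar x0 t' om)
             + F *m w t' om + r
  end.

End FiniteHorizon.
End Defs.

From HB Require Import structures.
From mathcomp Require Import all_boot all_order all_algebra.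
From mathcomp Require Import all_classical all_reals all_analysis.
From mathcomp Require Import complex.
From mathcomp Require Import measurable_realfun.
From mathcomp Require Import lra.
Set Implicit Arguments. Unset Strict Implicit. Unset Printing Implicit Defensive.
Import Order.TTheory GRing.Theory Num.Theory.
Local Open Scope classical_set_scope.
Local Open Scope ring_scope.

(* Unrolling the closed loop, x_t = A^t x_0 + sum_k A^k (B u + F w + r)_(t-1-k).
   Schur stability makes sum_k ||A^k|| finite (over C the characteristic
   polynomial splits into factors X - z with |z| < 1, and Cayley-Hamilton turns
   each factor into a geometric recursion for the entries of A^k), so
   ||x_t|| <= C_0 + ||F|| sum_k ||A^k|| ||w_(t-1-k)||.  Cauchy-Schwarz with the
   weights ||A^k|| bounds the square of the last sum by
   (sum_k ||A^k||) * sum_k ||A^k|| ||w_(t-1-k)||^2, whose expectation is at most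
   (sum_k ||A^k||)^2 E||w_0||^2 because the w_t are identically distributed. *)

Definition abs_summable {C : numDomainType} (u : nat -> C) : Prop :=
  exists c : C, forall K, \sum_(k < K) `|u k| <= c.

Lemma abs_summable_affine_recurrence (C : numFieldType) (z : C) (y e : nat -> C) :
  `|z| < 1 -> (forall k, y k.+1 = z * y k + e k) ->
  abs_summable e -> abs_summable y.
Proof.
move=> hz hy [ce hce]; exists ((`|y 0%N| + ce) / (1 - `|z|)) => K.
have ce0 : 0 <= ce by have := hce 0%N; rewrite big_ord0.
rewrite ler_pdivlMr ?subr_gt0 //.
have sum_le_succ K' : \sum_(k < K') `|y k| <= \sum_(k < K'.+1) `|y k|.
  by rewrite big_ord_recr /= lerDl.
case: K => [|K]; first by rewrite big_ord0 mul0r addr_ge0.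
set S := \sum_(k < K.+1) `|y k|.
have : S <= `|y 0%N| + `|z| * S + ce.
  rewrite {1}/S big_ord_recl /= -addrA lerD2l.
  apply: le_trans (_ : \sum_(k < K) (`|z| * `|y k| + `|e k|) <= _).
    by apply: ler_sum => k _; rewrite hy -normrM; exact: ler_normD.
  rewrite big_split /= -mulr_sumr lerD ?hce //.
  by rewrite ler_wpM2l ?sum_le_succ.
by rewrite mulrBr mulr1 lerBlDr => /le_trans; apply; rewrite addrAC mulrC.
Qed.

Lemma abs_summable_powers_annihilated (C : numFieldType) n (A : 'M[C]_n)
    (zs : seq C) (M : 'M[C]_n) :
  {in zs, forall z, `|z| < 1} -> \prod_(z <- zs) (A - z%:M) * M = 0 ->
  forall i j, abs_summable (fun k => (A ^+ k * M) i j).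
Proof.
have comm_scalar a : GRing.comm A a%:M.
  by rewrite /GRing.comm -!mulmxE scalar_mxC.
have comm_factors a b : GRing.comm (A - a%:M) (A - b%:M).
  apply/GRing.commrB/GRing.commr_sym/GRing.commrB.
  - exact/GRing.commr_sym/GRing.commrB.
  - exact/GRing.commr_sym/comm_scalar.
  - by rewrite /GRing.comm -!mulmxE -!scalar_mxM mulrC.
elim: zs M => [|z zs IH] M hzs hM i j.
  rewrite big_nil mul1r in hM; exists 0 => K.
  by rewrite hM big1 // => k _; rewrite mulr0 mxE normr0.
apply: (@abs_summable_affine_recurrence _ z _
  (fun k => (A ^+ k * ((A - z%:M) * M)) i j)).
- by apply: hzs; rewrite inE eqxx.
- move=> k; have scalar_step : A ^+ k * (z%:M * M) = z *: (A ^+ k * M).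
    by rewrite -!mulmxE mulmxA scalar_mxC -mulmxA mul_scalar_mx.
  rewrite mulrBl mulrBr scalar_step exprSr -mulrA !mxE.
  by rewrite addrCA subrr addr0.
apply: IH => [w hw|]; first by apply: hzs; rewrite inE hw orbT.
rewrite big_cons in hM; rewrite mulrA -[RHS]hM; congr (_ * _).
by apply/esym/GRing.commr_prod => w _; exact: comm_factors.
Qed.

Section SchurStable.
Local Open Scope complex_scope.
Variable R : realType.

Lemma abs_summable_complex (u : nat -> R) :
  abs_summable (fun k => (u k)%:C) -> abs_summable u.
Proof.
move=> [c hc]; exists (complex.Re c) => K.
have sum_real : \sum_(k < K) `|(u k)%:C| = (\sum_(k < K) `|u k|)%:C.
  rewrite rmorph_sum; apply: eq_bigr => k _.
  by rewrite normc_def /= expr0n /= addr0 sqrtr_sqr.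
by have := hc K; rewrite sum_real lecE => /andP[].
Qed.

(* Over C the characteristic polynomial of A splits with roots of modulus < 1,
   and by Cayley-Hamilton the product of the factors (Ac - z) vanishes. *)
Lemma schur_stable_abs_summable_powers n (A : 'M[R]_n) :
  schur_stable A -> forall i j, abs_summable (fun k => (A ^+ k) i j).
Proof.
case: n A => [|n] A hA i j; first by case: i.
apply: abs_summable_complex; set Ac := map_mx (real_complex R) A.
have [zs hzs] := closed_field_poly_normal (char_poly Ac).
rewrite (monicP (char_poly_monic Ac)) scale1r in hzs.
have hroots : {in zs, forall z, `|z| < 1}.
  by move=> z hz; apply: hA; rewrite -/Ac hzs root_prod_XsubC.
have hann : \prod_(z <- zs) (Ac - z%:M) * 1 = 0.
  rewrite mulr1 -(Cayley_Hamilton Ac) hzs rmorph_prod.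
  by apply: eq_bigr => z _; rewrite rmorphB /= horner_mx_X horner_mx_C.
have [c hc] := abs_summable_powers_annihilated hroots hann i j.
exists c => K; apply: le_trans (hc K); rewrite le_eqVlt; apply/orP; left.
by apply/eqP/eq_bigr => k _; rewrite mulr1 -rmorphXn mxE.
Qed.

End SchurStable.

Lemma affine_recurrence_closed_form (K : pzRingType) n (A : 'M[K]_n)
    (x v : nat -> 'cV[K]_n) :
  (forall t, x t.+1 = A *m x t + v t) ->
  forall t, x t = A ^+ t *m x 0%N + \sum_(k < t) A ^+ k *m v (t - k.+1)%N.
Proof.
move=> hx; elim=> [|t IH]; first by rewrite expr0 mul1mx big_ord0 addr0.
rewrite hx IH mulmxDr mulmxA mulmxE -exprS mulmx_sumr -addrA; congr (_ + _).
rewrite big_ord_recl /= subSS subn0 expr0 mul1mx addrC; congr (_ + _).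
by apply: eq_bigr => k _; rewrite mulmxA mulmxE -exprS subSS.
Qed.

Section EntrywiseL1Norm.
Variable R : realType.

Definition l1norm p q (M : 'M[R]_(p, q)) : R := \sum_i \sum_j `|M i j|.

Lemma l1norm_ge0 p q (M : 'M[R]_(p, q)) : 0 <= l1norm M.
Proof. by do 2![apply: sumr_ge0 => ? _]. Qed.

Lemma row_l1norm_le p q (M : 'M[R]_(p, q)) i : \sum_j `|M i j| <= l1norm M.
Proof. by rewrite /l1norm (bigD1 i) //= lerDl; do 2![apply: sumr_ge0 => ? _]. Qed.

Lemma normr_le_l1norm p q (M : 'M[R]_(p, q)) i j : `|M i j| <= l1norm M.
Proof.
apply: le_trans (row_l1norm_le M i).
by rewrite (bigD1 j) //= lerDl; apply: sumr_ge0.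
Qed.

Lemma l1normD p q (M N : 'M[R]_(p, q)) : l1norm (M + N) <= l1norm M + l1norm N.
Proof.
rewrite /l1norm -big_split; apply: ler_sum => i _.
by rewrite -big_split; apply: ler_sum => j _; rewrite mxE ler_normD.
Qed.

Lemma l1norm_sum p q K (f : 'I_K -> 'M[R]_(p, q)) :
  l1norm (\sum_(k < K) f k) <= \sum_(k < K) l1norm (f k).
Proof.
rewrite /l1norm [leRHS]exchange_big; apply: ler_sum => i _.
rewrite [leRHS]exchange_big; apply: ler_sum => j _.
by rewrite summxE ler_norm_sum.
Qed.

Lemma l1norm_mulmx p q s (M : 'M[R]_(p, q)) (N : 'M[R]_(q, s)) :
  l1norm (M *m N) <= l1norm M * l1norm N.
Proof.
rewrite /l1norm mulr_suml; apply: ler_sum => i _; rewrite mulr_suml.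
apply: le_trans (_ : \sum_j \sum_l `|M i l| * `|N l j| <= _).
  apply: ler_sum => j _; rewrite mxE (le_trans (ler_norm_sum _ _ _)) //.
  by apply: ler_sum => l _; rewrite normrM.
rewrite exchange_big; apply: ler_sum => l _.
by rewrite -mulr_sumr ler_wpM2l ?row_l1norm_le.
Qed.

Lemma l1norm_le_entrywise p q (M : 'M[R]_(p, q)) c :
  (forall i j, `|M i j| <= c) -> l1norm M <= (p * q)%:R * c.
Proof.
move=> hM; apply: (@le_trans _ _ (\sum_(i < p) \sum_(j < q) c)).
  by apply: ler_sum => i _; apply: ler_sum => j _; exact: hM.
by rewrite !sumr_const !card_ord -mulrnA mulr_natl mulnC.
Qed.

Lemma sqnorm_le_sqr_l1norm n (v : 'cV[R]_n) : sqnorm v <= l1norm v ^+ 2.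
Proof.
rewrite /sqnorm expr2 {1}/l1norm mulr_suml; apply: ler_sum => i _.
rewrite big_ord1 -real_normK ?num_real // expr2 ler_wpM2l //.
exact: normr_le_l1norm.
Qed.

Lemma sqr_wsum_le K (a b : 'I_K -> R) : (forall k, 0 <= a k) ->
  (\sum_k a k * b k) ^+ 2 <= (\sum_k a k) * \sum_k a k * b k ^+ 2.
Proof.
move=> a_ge0.
have sqr_sum : (\sum_k a k * b k) ^+ 2 = \sum_k \sum_l (a k * b k) * (a l * b l).
  by rewrite expr2 mulr_suml; apply: eq_bigr => k _; rewrite mulr_sumr.
have prod_sum : (\sum_k a k) * \sum_k a k * b k ^+ 2
    = \sum_k \sum_l a k * (a l * b l ^+ 2).
  by rewrite mulr_suml; apply: eq_bigr => k _; rewrite mulr_sumr.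
have prod_sum' : (\sum_k a k) * \sum_k a k * b k ^+ 2
    = \sum_k \sum_l a l * (a k * b k ^+ 2).
  rewrite mulrC mulr_suml; apply: eq_bigr => k _; rewrite mulr_sumr.
  by apply: eq_bigr => l _; rewrite mulrC.
(* symmetrize: the difference of twice both sides is
   \sum_(k, l) a k a l (b k - b l)^2 >= 0 *)
suff : (\sum_k a k * b k) ^+ 2 + (\sum_k a k * b k) ^+ 2
    <= (\sum_k a k) * (\sum_k a k * b k ^+ 2) + (\sum_k a k) * \sum_k a k * b k ^+ 2.
  by move=> h; lra.
rewrite [X in _ <= X + _]prod_sum [X in _ <= _ + X]prod_sum' sqr_sum.
rewrite -!big_split /=.
apply: ler_sum => k _; rewrite -!big_split /=; apply: ler_sum => l _.
have := mulr_ge0 (mulr_ge0 (a_ge0 k) (a_ge0 l)) (sqr_ge0 (b k - b l)); nra.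
Qed.

Lemma sqr_l1norm_le n (v : 'cV[R]_n) : l1norm v ^+ 2 <= n%:R * sqnorm v.
Proof.
have l1norm_col : l1norm v = \sum_i 1 * `|v i 0|.
  by apply: eq_bigr => i _; rewrite big_ord1 mul1r.
rewrite l1norm_col; apply: le_trans (sqr_wsum_le _ (fun=> ler01)) _.
rewrite sumr_const card_ord ler_wpM2l //.
by apply: ler_sum => i _; rewrite mul1r real_normK ?num_real.
Qed.

Lemma sqnorm_ge0 n (v : 'cV[R]_n) : 0 <= sqnorm v.
Proof. by apply: sumr_ge0 => i _; rewrite sqr_ge0. Qed.

Lemma schur_stable_sum_l1norm_powers_bounded n (A : 'M[R]_n) :
  schur_stable A -> exists c, forall K, \sum_(k < K) l1norm (A ^+ k) <= c.
Proof.
move=> hA; have [c hc] := boolp.choice (fun ij : 'I_n * 'I_n =>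
  schur_stable_abs_summable_powers hA ij.1 ij.2).
exists (\sum_i \sum_j c (i, j)) => K.
rewrite /l1norm exchange_big; apply: ler_sum => i _.
by rewrite exchange_big; apply: ler_sum => j _; exact: (hc (i, j)).
Qed.

End EntrywiseL1Norm.

Section ClosedLoopPathwiseBound.
Variables (R : realType) (d : measure_display) (T : measurableType d) (n m : nat).
Variables (A : 'M[R]_n) (B : 'M[R]_(n, m)) (F : 'M[R]_n) (r : 'cV[R]_n).
Variables (w : nat -> T -> 'cV[R]_n) (dstar : 'cV[R]_n -> 'cV[R]_m) (x0 : 'cV[R]_n).
Variables (Umax Ca : R).
Hypothesis Umax_ge0 : 0 <= Umax.
Hypothesis dstar_le : forall xi i, `|dstar xi i 0| <= Umax.
Hypothesis sum_l1norm_powers_le : forall K, \sum_(k < K) l1norm (A ^+ k) <= Ca.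

Local Notation x := (cl_state A B F r w dstar x0).
Let drift := l1norm B * (m%:R * Umax) + l1norm r.

Lemma cl_state_closed_form t om : x t om =
  A ^+ t *m x0 + \sum_(k < t) A ^+ k *m
    (B *m dstar (x (t - k.+1)%N om) + F *m w (t - k.+1)%N om + r).
Proof.
apply: (affine_recurrence_closed_form (x := x^~ om)
  (v := fun s => B *m dstar (x s om) + F *m w s om + r)) => s /=.
by rewrite !addrA.
Qed.

Lemma l1norm_cl_state_le t om : l1norm (x t om) <=
  Ca * (l1norm x0 + drift)
  + l1norm F * \sum_(k < t) l1norm (A ^+ k) * l1norm (w (t - k.+1)%N om).
Proof.
have l1norm_powt : l1norm (A ^+ t) <= Ca.
  apply: le_trans (sum_l1norm_powers_le t.+1); rewrite big_ord_recr /= lerDr.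
  by apply: sumr_ge0 => k _; exact: l1norm_ge0.
have input_le s : l1norm (B *m dstar (x s om) + F *m w s om + r)
    <= drift + l1norm F * l1norm (w s om).
  rewrite /drift [leRHS]addrAC; apply: le_trans (l1normD _ _) _; rewrite lerD2r.
  apply: le_trans (l1normD _ _) _; rewrite lerD ?l1norm_mulmx //.
  apply: le_trans (l1norm_mulmx _ _) _; rewrite ler_wpM2l ?l1norm_ge0 //.
  rewrite -[m in m%:R]muln1; apply: l1norm_le_entrywise => i j.
  by rewrite (ord1 j).
rewrite cl_state_closed_form; apply: le_trans (l1normD _ _) _.
rewrite mulrDr -addrA; apply: lerD.
  by apply: le_trans (l1norm_mulmx _ _) _; rewrite ler_wpM2r ?l1norm_ge0.
apply: le_trans (l1norm_sum _) _.
apply: le_trans (_ : \sum_(k < t) l1norm (A ^+ k)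
    * (drift + l1norm F * l1norm (w (t - k.+1)%N om)) <= _).
  apply: ler_sum => k _; apply: le_trans (l1norm_mulmx _ _) _.
  by rewrite ler_wpM2l ?l1norm_ge0.
under eq_bigr do rewrite mulrDr mulrCA.
rewrite big_split /= -!mulr_sumr lerD2r -mulr_suml ler_wpM2r ?sum_l1norm_powers_le //.
by rewrite addr_ge0 ?l1norm_ge0 // mulr_ge0 ?l1norm_ge0 ?mulr_ge0.
Qed.

Lemma sqnorm_cl_state_le t om : sqnorm (x t om) <=
  2 * (Ca * (l1norm x0 + drift)) ^+ 2
  + 2 * l1norm F ^+ 2 * Ca * n%:R
    * \sum_(k < t) l1norm (A ^+ k) * sqnorm (w (t - k.+1)%N om).
Proof.
have Ca_ge0 : 0 <= Ca by have := sum_l1norm_powers_le 0; rewrite big_ord0.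
set D := Ca * (l1norm x0 + drift).
set S := \sum_(k < t) l1norm (A ^+ k) * l1norm (w (t - k.+1)%N om).
have D_ge0 : 0 <= D.
  by rewrite mulr_ge0 ?addr_ge0 ?l1norm_ge0 // mulr_ge0 ?l1norm_ge0 ?mulr_ge0.
have S_ge0 : 0 <= S by apply: sumr_ge0 => k _; rewrite mulr_ge0 ?l1norm_ge0.
have sqr_S_le : S ^+ 2 <= Ca * (n%:R
    * \sum_(k < t) l1norm (A ^+ k) * sqnorm (w (t - k.+1)%N om)).
  apply: le_trans (sqr_wsum_le _ (fun k => l1norm_ge0 _)) _.
  apply: ler_pM; rewrite ?sum_l1norm_powers_le //.
  - by apply: sumr_ge0 => k _; rewrite l1norm_ge0.
  - by apply: sumr_ge0 => k _; rewrite mulr_ge0 ?l1norm_ge0 ?sqr_ge0.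
  rewrite mulr_sumr; apply: ler_sum => k _.
  by rewrite [leRHS]mulrCA ler_wpM2l ?l1norm_ge0 ?sqr_l1norm_le.
apply: le_trans (sqnorm_le_sqr_l1norm _) _.
have hx := l1norm_cl_state_le t om; rewrite -/D -/S in hx.
have hx0 := l1norm_ge0 (x t om).
apply: le_trans (_ : 2 * D ^+ 2 + 2 * l1norm F ^+ 2 * S ^+ 2 <= _).
  have := ler_pM hx0 hx0 hx hx; have := sqr_ge0 (D - l1norm F * S).
  rewrite !expr2; move: (l1norm (x t om)) (l1norm F) => X f; nra.
by rewrite lerD2l -!mulrA !ler_wpM2l ?sqr_ge0 ?l1norm_ge0.
Qed.

End ClosedLoopPathwiseBound.

Section Measurability.
Variables (R : realType) (d : measure_display) (T : measurableType d).

Lemma measurable_mulmx_entry p q s (M : 'M[R]_(p, q)) (f : T -> 'M[R]_(q, s)) :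
  (forall i j, measurable_fun setT (fun om => f om i j)) ->
  forall i j, measurable_fun setT (fun om => (M *m f om) i j).
Proof.
move=> mf i j; under eq_fun do rewrite mxE.
by apply: measurable_sum => l; apply: measurable_funM.
Qed.

Lemma measurable_addmx_entry p q (f g : T -> 'M[R]_(p, q)) :
  (forall i j, measurable_fun setT (fun om => f om i j)) ->
  (forall i j, measurable_fun setT (fun om => g om i j)) ->
  forall i j, measurable_fun setT (fun om => (f om + g om) i j).
Proof.
by move=> mf mg i j; under eq_fun do rewrite mxE; apply: measurable_funD.
Qed.

Lemma measurable_sqnorm n (f : T -> 'cV[R]_n) :
  (forall i, measurable_fun setT (fun om => f om i 0)) ->
  measurable_fun setT (fun om => sqnorm (f om)).
Proof. by move=> mf; apply: measurable_sum => i; apply: measurable_funX. Qed.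

Lemma measurable_cl_state_entry n m (A : 'M[R]_n) (B : 'M[R]_(n, m))
    (F : 'M[R]_n) (r : 'cV[R]_n) (w : nat -> T -> 'cV[R]_n)
    (dstar : 'cV[R]_n -> 'cV[R]_m) (x0 : 'cV[R]_n) :
  (forall t i, measurable_fun setT (fun om => w t om i 0)) ->
  (forall t i, measurable_fun setT
      (fun om => dstar (cl_state A B F r w dstar x0 t om) i 0)) ->
  forall t i, measurable_fun setT (fun om => cl_state A B F r w dstar x0 t om i 0).
Proof.
move=> mw mu.
have mw' t i j : measurable_fun setT (fun om => w t om i j) by rewrite (ord1 j).
have mu' t i j : measurable_fun setT
    (fun om => dstar (cl_state A B F r w dstar x0 t om) i j) by rewrite (ord1 j).
suff mx : forall t i j,
    measurable_fun setT (fun om => cl_state A B F r w dstar x0 t om i j).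
  by move=> t i; exact: mx.
elim=> [|t IH] /=; first by move=> i j; exact: measurable_cst.
apply: measurable_addmx_entry => [|i j]; last exact: measurable_cst.
apply: measurable_addmx_entry; last exact: measurable_mulmx_entry.
by apply: measurable_addmx_entry; apply: measurable_mulmx_entry.
Qed.

End Measurability.

Section SecondMoments.
Variables (R : realType) (d : measure_display) (T : measurableType d).
Variable P : probability T R.

Lemma ge0_integral_lin_comb (I : Type) (s : seq I) (a : I -> R)
    (g : I -> T -> R) (e : I -> R) :
  (forall k, 0 <= a k) -> (forall k om, 0 <= g k om) ->
  (forall k, measurable_fun setT (g k)) ->
  (forall k, \int[P]_om (g k om)%:E = (e k)%:E)%E ->
  (\int[P]_om (\sum_(k <- s) a k * g k om)%:E = (\sum_(k <- s) a k * e k)%:E)%E.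
Proof.
move=> a_ge0 g_ge0 mg ig; under eq_integral do rewrite -sumEFin.
rewrite ge0_integral_sum //; last 2 first.
- by move=> k; apply/measurable_EFinP/measurable_funM.
- by move=> k om _; rewrite lee_fin mulr_ge0.
rewrite -sumEFin; apply: eq_bigr => k _; under eq_integral do rewrite EFinM.
rewrite ge0_integralZl_EFin ?ig // => [om _|]; first by rewrite lee_fin.
exact/measurable_EFinP.
Qed.

Lemma integral_cst_addl (c : R) (g : T -> R) :
  0 <= c -> (forall om, 0 <= g om) -> measurable_fun setT g ->
  (\int[P]_om (c + g om)%:E = c%:E + \int[P]_om (g om)%:E)%E.
Proof.
move=> c_ge0 g_ge0 mg; under eq_integral do rewrite EFinD.
rewrite ge0_integralD //; last 2 first.
- by move=> om _; rewrite lee_fin.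
- exact/measurable_EFinP.
rewrite integral_cst //; congr (_ + _)%E.
by rewrite -[RHS]mule1; congr (_ * _)%E; exact: probability_setT.
Qed.

Lemma integral_sqnorm n (f : T -> 'cV[R]_n) :
  (forall i, measurable_fun setT (fun om => f om i 0)) ->
  (\int[P]_om (sqnorm (f om))%:E = \sum_i \int[P]_om ((f om i 0) ^+ 2)%:E)%E.
Proof.
move=> mf; under eq_integral do rewrite -sumEFin.
rewrite ge0_integral_sum // => [i|i om _]; last by rewrite lee_fin sqr_ge0.
exact/measurable_EFinP/measurable_funX.
Qed.

(* Entries of w t and w 0 have the same law: take the box with a single
   nontrivial side. *)
Lemma iid_integral_sqr_entry n (w : nat -> T -> 'cV[R]_n) :
  iid_finite_cov P w -> forall t j,
  (\int[P]_om ((w t om j 0) ^+ 2)%:E = \int[P]_om ((w 0%N om j 0) ^+ 2)%:E)%E.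
Proof.
case=> mw idw _ _ t j.
pose X s om := w s om j 0.
pose f (y : R) : \bar R := (y ^+ 2)%:E.
have mf : measurable_fun setT f by exact/measurable_EFinP/measurable_funX.
have f_ge0 : {in setT, forall y, (0 <= f y)%E} by move=> y _; rewrite lee_fin sqr_ge0.
have pushX s : (\int[pushforward P (X s)]_y f y = \int[P]_om (f \o X s) om)%E.
  by rewrite ge0_integral_pushforward ?preimage_setT //; exact: mw.
rewrite -[LHS]/(\int[P]_om (f \o X t) om)%E -[RHS]/(\int[P]_om (f \o X 0%N) om)%E.
rewrite -!pushX; apply: eq_measure_integral => [||? ? S mS _]; try exact: mw.
pose box j' := if j' == j then S else setT.
have mbox j' : measurable (box j') by rewrite /box; case: eqP.
have box_preimage s : box_event (w s) box = X s @^-1` S.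
  apply/seteqP; split => om /=; first by move/(_ j); rewrite /box eqxx.
  by move=> XS j'; rewrite /box; case: eqP => [->|].
by have := idw t box mbox; rewrite /pushforward !box_preimage.
Qed.

Lemma iid_integral_sqnorm n (w : nat -> T -> 'cV[R]_n) :
  iid_finite_cov P w ->
  exists2 s2 : R, 0 <= s2 & forall t, (\int[P]_om (sqnorm (w t om))%:E = s2%:E)%E.
Proof.
move=> hiid; have [mw _ _ fin2] := hiid.
have sqnorm_ge0 s : (0 <= \int[P]_om (sqnorm (w s om))%:E)%E.
  by apply: integral_ge0 => om _; rewrite lee_fin sqnorm_ge0.
exists (fine (\int[P]_om (sqnorm (w 0%N om))%:E)); first exact: fine_ge0.
move=> t; rewrite fineK; last first.
  rewrite ge0_fin_numE // integral_sqnorm //.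
  by apply: lte_sum_pinfty => j _; exact: fin2.
rewrite !integral_sqnorm //; apply: eq_bigr => j _.
exact: iid_integral_sqr_entry.
Qed.

Lemma integral_le_cst_add_wsum K (h : T -> R) (c0 : R) (a : 'I_K -> R)
    (g : 'I_K -> T -> R) (s2 : R) :
  0 <= c0 -> (forall k, 0 <= a k) -> (forall k om, 0 <= g k om) ->
  (forall k, measurable_fun setT (g k)) ->
  (forall k, \int[P]_om (g k om)%:E = s2%:E)%E ->
  measurable_fun setT h -> (forall om, 0 <= h om) ->
  (forall om, h om <= c0 + \sum_k a k * g k om) ->
  (\int[P]_om (h om)%:E <= (c0 + (\sum_k a k) * s2)%:E)%E.
Proof.
move=> c0_ge0 a_ge0 g_ge0 mg ig mh h_ge0 h_le.
have wsum_ge0 om : 0 <= \sum_k a k * g k om.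
  by apply: sumr_ge0 => k _; rewrite mulr_ge0.
have m_wsum : measurable_fun setT (fun om => \sum_k a k * g k om).
  by apply: measurable_sum => k; apply: measurable_funM.
apply: (@le_trans _ _ (\int[P]_om (c0 + \sum_k a k * g k om)%:E)%E).
  apply: ge0_le_integral => //; first by move=> om _; rewrite lee_fin.
  - exact/measurable_EFinP.
  - by apply/measurable_EFinP/measurable_funD.
  - by move=> om _; rewrite lee_fin.
rewrite integral_cst_addl // (ge0_integral_lin_comb _ (e := fun=> s2)) //.
by rewrite -EFinD mulr_suml.
Qed.

End SecondMoments.

Lemma fh_feasible_input_le (R : realType) n m N (Umax phimax : R)
    (G : 'I_N -> 'I_N -> 'M[R]_(m, n)) (dd : 'I_N -> 'cV[R]_m) :
  0 <= phimax -> fh_feasible Umax phimax G dd -> forall k i, `|dd k i 0| <= Umax.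
Proof.
move=> phimax_ge0 [_ hfeas] k i; apply: le_trans (hfeas k i).
by rewrite lerDl mulr_ge0 //; do 2![apply: sumr_ge0 => ? _].
Qed.


Theorem proposition3
  (R : realType) (d : measure_display) (T : measurableType d) (P : probability T R)
  (n m N : nat) (hN : (0 < N)%N)
  (A : 'M[R]_n) (B : 'M[R]_(n, m)) (F : 'M[R]_n) (r : 'cV[R]_n)
  (w : nat -> T -> 'cV[R]_n)
  (Q : 'I_N.+1 -> 'M[R]_n) (Rw : 'I_N -> 'M[R]_m)
  (Umax phimax : R) (phi : 'I_N -> 'I_n -> R -> R)
  (dstar : 'cV[R]_n -> 'cV[R]_m) (x0 : 'cV[R]_n) :
  iid_finite_cov P w ->
  (forall k, posdef (Q k)) -> (forall k, posdef (Rw k)) ->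
  0 < Umax -> 0 < phimax -> phimax <= Umax ->
  (forall i j s, `|phi i j s| <= phimax) ->
  (forall i j, measurable_fun setT (phi i j)) ->
  (forall xi : 'cV[R]_n, exists G dd,
      fh_optimal A B F r Q Rw Umax phimax phi P w xi G dd /\
      dstar xi = dd (Ordinal hN)) ->
  (forall t (i : 'I_m), measurable_fun setT
      (fun om => dstar (cl_state A B F r w dstar x0 t om) i 0)) ->
  schur_stable A ->
  (forall (i : 'I_N) (j : 'I_n), (\int[P]_om (phi i j ((F *m w i om) j 0))%:E = 0)%E) ->
  exists M : R, forall t : nat,
    (\int[P]_om (sqnorm (cl_state A B F r w dstar x0 t om))%:E <= M%:E)%E.
Proof.
move=> hiid _ _ Umax_gt0 phimax_gt0 _ _ _ hopt mu hA _.
have dstar_le xi i : `|dstar xi i 0| <= Umax.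
  have [G [dd [[hfeas _] ->]]] := hopt xi.
  exact: fh_feasible_input_le (ltW phimax_gt0) hfeas _ _.
have [Ca hCa] := schur_stable_sum_l1norm_powers_bounded hA.
have Ca_ge0 : 0 <= Ca by have := hCa 0%N; rewrite big_ord0.
have [s2 s2_ge0 hs2] := iid_integral_sqnorm hiid; have [mw _ _ _] := hiid.
set c0 := 2 * (Ca * (l1norm x0 + (l1norm B * (m%:R * Umax) + l1norm r))) ^+ 2.
set c := 2 * l1norm F ^+ 2 * Ca * n%:R.
have c_ge0 : 0 <= c by rewrite /c !mulr_ge0 ?l1norm_ge0.
exists (c0 + c * Ca * s2) => t.
apply: le_trans (@integral_le_cst_add_wsum _ _ _ P t _ c0
  (fun k => c * l1norm (A ^+ k)) (fun k om => sqnorm (w (t - k.+1)%N om)) s2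
  _ _ _ _ (fun=> hs2 _) _ _ _) _.
- by rewrite mulr_ge0 ?sqr_ge0.
- by move=> k; rewrite mulr_ge0 ?l1norm_ge0.
- by move=> k om; rewrite sqnorm_ge0.
- by move=> k; exact/measurable_sqnorm.
- exact/measurable_sqnorm/measurable_cl_state_entry.
- by move=> om; rewrite sqnorm_ge0.
- move=> om; have := sqnorm_cl_state_le B F r w x0 (ltW Umax_gt0) dstar_le hCa t om.
  by rewrite mulr_sumr; under eq_bigr do rewrite mulrA.
by rewrite lee_fin lerD2l -mulr_sumr ler_wpM2r // ler_wpM2l.
Qed.
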